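(* Let $N\ge1$, $K\ge1$, $T\ge1$, $L>0$, $\sigma_l^2\ge0$, $\sigma_g^2>0$, $C>0$, $\Delta_0=f(W_0)-f^*\ge0$, and truncation errors $\hat r_1,\dots,\hat r_N\ge0$ be fixed, let $D_0=4\big(1+\frac{1}{K^2T}\big)$, and for $p=(p_1,\dots,p_N)\in\mathbb{R}^N$ define $$\Phi(p)=\frac{1}{C}\Bigg[\frac{L\Delta_0}{\sqrt{T}}+\frac{L(L+1)}{2}\Bigg(\frac{3ND_0^K}{\sqrt T}\sum_{i=1}^N p_i^2\hat r_i^2+\frac{24N\sigma_l^2(D_0^K-1)}{L^2K^2T^{3/2}(D_0-1)}\sum_{i=1}^N p_i^2+\frac{6N\sigma_l^2}{L^2\sqrt T}\sum_{i=1}^N p_i^2\Bigg)+\frac{3N(\sigma_l^2+6K\sigma_g^2)}{2KT}\sum_{i=1}^N p_i^2+\frac{N\sigma_l^2}{2\sqrt T}\sum_{i=1}^N p_i^2\Bigg].$$ Then there is a constant $\epsilon>0$, depending only on $N,K,T,L,\sigma_l^2,\sigma_g^2$ (and not on $p$ or the $\hat r_i$), such that the minimizer of $\Phi$ over $\{p\in\mathbb{R}^N:\sum_{i=1}^N p_i=1\}$ is $$p_i^*=\frac{1/(\hat r_i^2+\epsilon)}{\sum_{j=1}^N 1/(\hat r_j^2+\epsilon)},\qquad i=1,\dots,N.$$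
   Context: $\Phi(p)$ is the right-hand side of the FedHL convergence bound $\frac1T\sum_{t=0}^{T-1}\mathbb{E}\|\nabla f(W_t)\|^2\le\Phi(p)$ for heterogeneous-LoRA federated learning with $N$ clients, aggregation weights $p_i$, $K$ local SGD steps, $T$ rounds, learning rate $\eta_t=\frac{1}{LK\sqrt T}$ (so $D_0=4(1+L^2\eta_t^2)$), smoothness constant $L$, local gradient variance bound $\sigma_l^2$, gradient heterogeneity bound $\sigma_g^2$, and $\hat r_i$ bounding the rank-$r_i$ SVD truncation error of client $i$ via $\mathbb{E}\|W_t-[W_t]_{r_i}\|_F^2\le\hat r_i^2$. In the minimization, $C$, $\Delta_0$ and the $\hat r_i$ are held fixed. *)

From HB Require Import structures.
From mathcomp Require Import all_boot all_order all_algebra.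
From mathcomp Require Import reals.
Set Implicit Arguments. Unset Strict Implicit. Unset Printing Implicit Defensive.
Import Order.TTheory GRing.Theory Num.Theory.
Local Open Scope ring_scope.

Definition D0 {R : realType} (K T : nat) : R := 4 * (1 + 1 / ((K%:R) ^+ 2 * T%:R)).

(* Phi(p) from the FedHL bound; sl2 = sigma_l^2, sg2 = sigma_g^2,
   rhat i = \hat r_i, Delta0 = f(W_0) - f^*.  T^{3/2} is written T * sqrt T. *)
Definition Phi {R : realType} (N K T : nat) (L sl2 sg2 C Delta0 : R)
  (rhat : 'I_N -> R) (p : 'I_N -> R) : R :=
  let sT := Num.sqrt (T%:R : R) in
  let D := D0 (R:=R) K T in
  let Sp2 := \sum_(i < N) p i ^+ 2 in
  let Spr := \sum_(i < N) p i ^+ 2 * rhat i ^+ 2 in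
  (1 / C) *
  ( L * Delta0 / sT
  + L * (L + 1) / 2 *
      ( 3 * N%:R * D ^+ K / sT * Spr
      + 24 * N%:R * sl2 * (D ^+ K - 1)
          / (L ^+ 2 * (K%:R) ^+ 2 * (T%:R * sT) * (D - 1)) * Sp2
      + 6 * N%:R * sl2 / (L ^+ 2 * sT) * Sp2 )
  + 3 * N%:R * (sl2 + 6 * K%:R * sg2) / (2 * K%:R * T%:R) * Sp2
  + N%:R * sl2 / (2 * sT) * Sp2 ).

Definition pstar {R : realType} (N : nat) (rhat : 'I_N -> R) (eps : R) : 'I_N -> R :=
  fun i => (1 / (rhat i ^+ 2 + eps)) / (\sum_(j < N) 1 / (rhat j ^+ 2 + eps)).

From HB Require Import structures.
From mathcomp Require Import all_boot all_order all_algebra.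
From mathcomp Require Import reals.
From mathcomp Require Import ring lra.
From Stdlib Require Import FunctionalExtensionality.
Set Implicit Arguments. Unset Strict Implicit. Unset Printing Implicit Defensive.
Import Order.TTheory GRing.Theory Num.Theory.
Local Open Scope ring_scope.

(* Phi(p) = c + a * sum_i (rhat_i^2 + eps) p_i^2 with a > 0, where a is the
   coefficient of sum_i p_i^2 rhat_i^2 and eps is the ratio of the coefficient
   of sum_i p_i^2 to a; neither depends on p or rhat.  Over the affine
   hyperplane sum_i p_i = 1, a weighted sum of squares sum_i w_i p_i^2 with
   positive weights is uniquely minimised at p_i proportional to 1 / w_i,
   because the Lagrange condition w_i p_i = const makes the cross term of the
   expansion around that point vanish. *)

Section InverseWeights.
Variables (R : realFieldType) (I : finType) (w : I -> R).
Hypothesis w_gt0 : forall i, 0 < w i.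

Definition inv_weights (i : I) : R := (1 / w i) / \sum_j 1 / w j.

Lemma sum_inv_gt0 (i0 : I) : 0 < \sum_j 1 / w j.
Proof.
rewrite (bigD1 i0) //=; apply: ltr_pwDl; first by rewrite divr_gt0.
by apply: sumr_ge0 => j _; rewrite divr_ge0 // ltW.
Qed.

Lemma sum_inv_weights (i0 : I) : \sum_i inv_weights i = 1.
Proof. by rewrite -mulr_suml divff // gt_eqF // (sum_inv_gt0 i0). Qed.

Lemma weighted_sqr_sum_decomp (i0 : I) (p : I -> R) : \sum_i p i = 1 ->
  \sum_i w i * p i ^+ 2 =
  \sum_i w i * inv_weights i ^+ 2 + \sum_i w i * (p i - inv_weights i) ^+ 2.
Proof.
move=> sum_p; set S := \sum_j 1 / w j.
have S_neq0 : S != 0 by rewrite gt_eqF // (sum_inv_gt0 i0).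
(* w i * inv_weights i = 1 / S, so the cross term sums to 2 / S * (1 - 1) *)
have -> : \sum_i w i * p i ^+ 2 = \sum_i (w i * inv_weights i ^+ 2
    + w i * (p i - inv_weights i) ^+ 2 + 2 / S * (p i - inv_weights i)).
  apply: eq_bigr => i _; rewrite /inv_weights -/S.
  by field; rewrite S_neq0 gt_eqF.
by rewrite !big_split /= -mulr_sumr sumrB sum_p (sum_inv_weights i0) subrr
  mulr0 addr0.
Qed.

Lemma weighted_sqr_sum_min (i0 : I) (p : I -> R) : \sum_i p i = 1 ->
  \sum_i w i * inv_weights i ^+ 2 <= \sum_i w i * p i ^+ 2.
Proof.
move=> sum_p; rewrite (weighted_sqr_sum_decomp i0 sum_p) lerDl.
by apply: sumr_ge0 => i _; rewrite mulr_ge0 ?sqr_ge0 // ltW.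
Qed.

Lemma weighted_sqr_sum_min_eq (i0 : I) (p : I -> R) : \sum_i p i = 1 ->
  \sum_i w i * p i ^+ 2 = \sum_i w i * inv_weights i ^+ 2 -> p = inv_weights.
Proof.
move=> sum_p; rewrite (weighted_sqr_sum_decomp i0 sum_p) => /eqP.
rewrite addrC -subr_eq0 addrK => /eqP dev0.
have dev_ge0 i : 0 <= w i * (p i - inv_weights i) ^+ 2.
  by rewrite mulr_ge0 ?sqr_ge0 // ltW.
apply: functional_extensionality => i; apply/eqP; rewrite -subr_eq0.
have /(_ i isT)/eqP := psumr_eq0P (fun i _ => dev_ge0 i) dev0.
by rewrite mulf_eq0 gt_eqF //= sqrf_eq0.
Qed.

End InverseWeights.

Lemma D0_ge4 (R : realType) (K T : nat) : 4 <= D0 (R := R) K T.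
Proof.
rewrite /D0; suff : 0 <= 1 / ((K%:R : R) ^+ 2 * T%:R) by lra.
by rewrite divr_ge0 // mulr_ge0 ?exprn_ge0.
Qed.

Section PhiCoefficients.
Variables (R : realType) (N K T : nat) (L sl2 sg2 : R).

Let sT : R := Num.sqrt T%:R.
Let D : R := D0 K T.

Definition Phi_trunc_coef : R := L * (L + 1) / 2 * (3 * N%:R * D ^+ K / sT).

Definition Phi_noise_coef : R :=
  L * (L + 1) / 2 *
    ( 24 * N%:R * sl2 * (D ^+ K - 1) / (L ^+ 2 * K%:R ^+ 2 * (T%:R * sT) * (D - 1))
    + 6 * N%:R * sl2 / (L ^+ 2 * sT) )
  + 3 * N%:R * (sl2 + 6 * K%:R * sg2) / (2 * K%:R * T%:R)
  + N%:R * sl2 / (2 * sT).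

Definition Phi_eps : R := Phi_noise_coef / Phi_trunc_coef.

Lemma Phi_affine (C Delta0 : R) (rhat p : 'I_N -> R) :
  Phi_trunc_coef != 0 ->
  Phi K T L sl2 sg2 C Delta0 rhat p =
  1 / C * (L * Delta0 / sT)
  + Phi_trunc_coef / C * \sum_i (rhat i ^+ 2 + Phi_eps) * p i ^+ 2.
Proof.
move=> a_neq0.
have -> : \sum_i (rhat i ^+ 2 + Phi_eps) * p i ^+ 2 =
    \sum_i p i ^+ 2 * rhat i ^+ 2 + Phi_eps * \sum_i p i ^+ 2.
  by rewrite mulr_sumr -big_split; apply: eq_bigr => i _ /=; ring.
have cancel_a : Phi_trunc_coef / C * Phi_eps = Phi_noise_coef / C.
  by rewrite /Phi_eps mulrC mulrA divfK.
rewrite mulrDr mulrA cancel_a /Phi /Phi_noise_coef /Phi_trunc_coef -/sT -/D.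
ring.
Qed.

Hypotheses (N_gt0 : (0 < N)%N) (K_gt0 : (0 < K)%N) (T_gt0 : (0 < T)%N).
Hypotheses (L_gt0 : 0 < L) (sl2_ge0 : 0 <= sl2) (sg2_gt0 : 0 < sg2).

Let sT_gt0 : 0 < sT. Proof. by rewrite sqrtr_gt0 ltr0n. Qed.

Lemma Phi_trunc_coef_gt0 : 0 < Phi_trunc_coef.
Proof.
have DK_gt0 : 0 < D ^+ K by rewrite exprn_gt0 // (lt_le_trans _ (D0_ge4 R K T)).
by rewrite !(mulr_gt0, divr_gt0, addr_gt0, invr_gt0) ?ltr0n.
Qed.

Lemma Phi_noise_coef_gt0 : 0 < Phi_noise_coef.
Proof.
have D_gt1 : 1 < D by rewrite (lt_le_trans _ (D0_ge4 R K T)) // ltr1n.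
have DK_ge1 : 1 <= D ^+ K by rewrite exprn_ege1 // ltW.
have drift_ge0 : 0 <= L * (L + 1) / 2 *
    ( 24 * N%:R * sl2 * (D ^+ K - 1) / (L ^+ 2 * K%:R ^+ 2 * (T%:R * sT) * (D - 1))
    + 6 * N%:R * sl2 / (L ^+ 2 * sT) ).
  by rewrite !(subr_ge0, mulr_ge0, divr_ge0, addr_ge0, invr_ge0, exprn_ge0)
    ?ler0n ?(ltW L_gt0) ?(ltW sT_gt0) ?(ltW D_gt1).
have hetero_gt0 : 0 < 3 * N%:R * (sl2 + 6 * K%:R * sg2) / (2 * K%:R * T%:R).
  by rewrite !(mulr_gt0, divr_gt0, invr_gt0, ltr_wpDl, mulr_ge0) ?ltr0n ?ler0n.
have noise_ge0 : 0 <= N%:R * sl2 / (2 * sT).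
  by rewrite !(mulr_ge0, divr_ge0, invr_ge0) ?ler0n ?(ltW sT_gt0).
rewrite /Phi_noise_coef; lra.
Qed.

End PhiCoefficients.

Theorem theorem3 (R : realType) (N K T : nat) (L sl2 sg2 : R) :
  (1 <= N)%N -> (1 <= K)%N -> (1 <= T)%N ->
  0 < L -> 0 <= sl2 -> 0 < sg2 ->
  exists eps : R, 0 < eps /\
    forall (C Delta0 : R) (rhat : 'I_N -> R),
      0 < C -> 0 <= Delta0 -> (forall i, 0 <= rhat i) ->
      let ps := pstar rhat eps in
      \sum_(i < N) ps i = 1 /\
      forall p : 'I_N -> R, \sum_(i < N) p i = 1 ->
        Phi K T L sl2 sg2 C Delta0 rhat ps <= Phi K T L sl2 sg2 C Delta0 rhat p /\
        (Phi K T L sl2 sg2 C Delta0 rhat p = Phi K T L sl2 sg2 C Delta0 rhat ps ->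
         p = ps).
Proof.
move=> N_gt0 K_gt0 T_gt0 L_gt0 sl2_ge0 sg2_gt0.
have a_gt0 : 0 < Phi_trunc_coef N K T L by exact: Phi_trunc_coef_gt0.
have b_gt0 : 0 < Phi_noise_coef N K T L sl2 sg2 by exact: Phi_noise_coef_gt0.
exists (Phi_eps N K T L sl2 sg2); split; first exact: divr_gt0.
move=> C Delta0 rhat C_gt0 _ rhat_ge0 ps.
set w := fun i => rhat i ^+ 2 + Phi_eps N K T L sl2 sg2.
have w_gt0 i : 0 < w i by rewrite ltr_wpDl ?sqr_ge0 ?divr_gt0.
have -> : ps = inv_weights w by [].
have i0 : 'I_N := Ordinal N_gt0.
split=> [|p sum_p]; first exact: sum_inv_weights.
rewrite !Phi_affine ?gt_eqF // -/w.
have aC_gt0 : 0 < Phi_trunc_coef N K T L / C by rewrite divr_gt0.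
split; first by rewrite lerD2l ler_pM2l // (weighted_sqr_sum_min w_gt0 i0).
by move=> /addrI /(mulfI (lt0r_neq0 aC_gt0)); exact: weighted_sqr_sum_min_eq.
Qed.
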